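(* Let $B$ be a unital $C^*$-algebra with a $*$-isomorphism $\psi:B\to M_n\otimes B$ satisfying $\psi(1)=I_n\otimes1$, let $A$ be a maximal abelian $*$-subalgebra of $B$, and let $\phi:A\to\mathbb{C}$ be a unital algebra homomorphism extended to a positive contraction $\phi:B\to\mathbb{C}$. If $\sigma_2(A)\subset A$, then $(\mathrm{id}\otimes e_{ij}\otimes\mathrm{id}^{\otimes(m-1)})(\phi_{m+1}(A))\subset\phi_m(A)$ for all $m\ge1$ and $1\le i,j\le n$.
   Context: $M_n=M_n(\mathbb{C})$, matrix units $E_{kl}$, identity $I_n$. Define $\psi_0=\mathrm{id}_B$, $\psi_{m+1}=(\mathrm{id}^{\otimes m}\otimes\psi)\circ\psi_m:B\to M_n^{\otimes(m+1)}\otimes B$. With $f(b)=I_n\otimes b$, $\sigma_2=\psi_2^{-1}\circ(\mathrm{id}\otimes f)\circ\psi_1:B\to B$. For $m\ge1$, $\phi_m=(\mathrm{id}^{\otimes m}\otimes\phi)\circ\psi_m:B\to M_n^{\otimes m}$. $e_{ij}:M_n\to\mathbb{C}$ is the linear functional $e_{ij}(E_{kl})=\delta_{ik}\delta_{jl}$, and $\mathrm{id}\otimes e_{ij}\otimes\mathrm{id}^{\otimes(m-1)}:M_n^{\otimes(m+1)}\to M_n^{\otimes m}$ applies $e_{ij}$ to the second tensor factor. *)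

From mathcomp Require Import all_boot all_algebra.
From mathcomp Require Import reals.
From mathcomp.real_closed Require Import complex.
Import GRing.Theory Num.Theory.

Set Implicit Arguments.
Unset Strict Implicit.
Unset Printing Implicit Defensive.

Local Open Scope ring_scope.
Local Open Scope complex_scope.

Section Cstar.
Variable R : realType.
Local Notation C := (R[i]).
Variable B : algType C.

Definition is_unital_Cstar_algebra (star : B -> B) (nrm : B -> R) : Prop :=
  [/\ (forall x, star (star x) = x) /\
      (forall x y, star (x + y) = star x + star y) /\
      (forall (c : C) x, star (c *: x) = c^* *: star x) /\
      (forall x y, star (x * y) = star y * star x),
      (forall x, 0 <= nrm x) /\ (forall x, nrm x = 0 -> x = 0),
      (forall x y, nrm (x + y) <= nrm x + nrm y) /\
      (forall (c : C) x, (nrm (c *: x))%:C = `|c| * (nrm x)%:C),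
      (forall x y, nrm (x * y) <= nrm x * nrm y) /\
      (forall x, nrm (star x * x) = nrm x ^+ 2)
    & (forall u : nat -> B,
        (forall e : R, 0 < e -> exists N, forall p q, (N <= p)%N -> (N <= q)%N ->
                                      nrm (u p - u q) < e) ->
        exists l : B, forall e : R, 0 < e -> exists N, forall p, (N <= p)%N ->
                                      nrm (u p - l) < e)].

Definition invertible (x : B) : Prop := exists y : B, y * x = 1 /\ x * y = 1.

(** Positive element: self-adjoint with spectrum in [0, +oo). *)
Definition positive_elt (star : B -> B) (b : B) : Prop :=
  star b = b /\ forall l : C, ~ invertible (b - l%:A) -> 0 <= l.

Definition star_subalgebra (star : B -> B) (A : B -> Prop) : Prop :=
  [/\ A 0,
      (forall x y, A x -> A y -> A (x + y)),
      (forall (c : C) x, A x -> A (c *: x)),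
      (forall x y, A x -> A y -> A (x * y))
    & (forall x, A x -> A (star x))].

Definition abelian_set (A : B -> Prop) : Prop :=
  forall x y, A x -> A y -> x * y = y * x.

Definition maximal_abelian_star_subalgebra (star : B -> B) (A : B -> Prop) :=
  [/\ star_subalgebra star A, abelian_set A &
      forall A' : B -> Prop, star_subalgebra star A' -> abelian_set A' ->
        (forall x, A x -> A' x) -> forall x, A' x -> A x].

Definition positive_contraction (star : B -> B) (nrm : B -> R) (phi : B -> C) :=
  [/\ (forall (c : C) x y, phi (c *: x + y) = c * phi x + phi y),
      (forall b, positive_elt star b -> 0 <= phi b)
    & (forall b, `|phi b| <= (nrm b)%:C)].

Definition unital_hom_on (A : B -> Prop) (phi : B -> C) :=
  phi 1 = 1 /\ forall x y, A x -> A y -> phi (x * y) = phi x * phi y.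

(** *-isomorphism psi : B -> M_n (x) B = M_n(B) (matrices over B, with the
    conjugate-transpose involution), unital. *)
Definition star_iso (n : nat) (star : B -> B) (psi : B -> 'M[B]_n) :=
  [/\ (forall (c : C) x y i j, psi (c *: x + y) i j = c *: psi x i j + psi y i j),
      (forall x y, psi (x * y) = psi x *m psi y),
      (forall x i j, psi (star x) i j = star (psi x j i))
    & bijective psi].

End Cstar.

(** An element of M_n^{(x) m} (x) X is represented by its matrix entries,
    indexed by multi-indices k, l : 'I_m -> 'I_n (the k-th coordinate is the
    row index in the (k+1)-th tensor factor M_n). *)
Section Tensors.
Variable n : nat.

Definition tens (X : Type) (m : nat) := ('I_m -> 'I_n) -> ('I_m -> 'I_n) -> X.

Definition minit m (k : 'I_m.+1 -> 'I_n) : 'I_m -> 'I_n :=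
  fun p => k (widen_ord (leqnSn m) p).
Definition mlast m (k : 'I_m.+1 -> 'I_n) : 'I_n := k ord_max.

(** psi_0 = id, psi_{m+1} = (id^{(x)m} (x) psi) o psi_m *)
Fixpoint psi_iter (X : Type) (psi : X -> 'M[X]_n) (m : nat) : X -> tens X m :=
  match m return X -> tens X m with
  | 0 => fun b _ _ => b
  | m'.+1 => fun b k l =>
      psi (@psi_iter X psi m' b (@minit m' k) (@minit m' l)) (@mlast m' k) (@mlast m' l)
  end.

(** (id (x) f) : M_n (x) B -> M_n (x) M_n (x) B with f(b) = I_n (x) b *)
Definition id_tens_f (X : nzRingType) (x : tens X 1) : tens X 2 :=
  fun k l => if mlast k == mlast l then x (minit k) (minit l) else 0.

Definition phi_iter (X Y : Type) (psi : X -> 'M[X]_n) (phi : X -> Y) (m : nat)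
  (b : X) : tens Y m := fun k l => phi (@psi_iter X psi m b k l).

Definition ins_second m (i : 'I_n) (k : 'I_m -> 'I_n) : 'I_m.+1 -> 'I_n :=
  fun p => if unlift (inord 1 : 'I_m.+1) p is Some q then k q else i.

(** id (x) e_ij (x) id^{(x)(m-1)} : M_n^{(x)(m+1)} -> M_n^{(x)m}, m >= 1 *)
Definition slice_second (Y : Type) m (i j : 'I_n) (x : tens Y m.+1) : tens Y m :=
  fun k l => x (ins_second i k) (ins_second j l).

End Tensors.

Arguments psi_iter {n X} psi m _ _ _.
Arguments phi_iter {n X Y} psi phi m _ _ _.

(* Put [t := psi^-1 ((id (x) e_ij) (psi_2 a))].  Since the fixed indices sit in
   the two innermost tensor factors, [phi_m t] is the [(i, j)]-slice of
   [phi_(m+1) a].  For [b] in [A], [b' := sigma_2 b] lies in [A] and satisfies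
   [psi_2 b' = I_n (x) psi b]; slicing [a b' = b' a] gives
   [psi t * psi b = psi b * psi t], so [t] commutes with [A].  A maximal abelian
   *-subalgebra is its own commutant (split an element into self-adjoint parts),
   hence [t] lies in [A]. *)

From mathcomp Require Import all_boot all_algebra.
From mathcomp Require Import reals.
From mathcomp.real_closed Require Import complex.
Import GRing.Theory Num.Theory.

Set Implicit Arguments.
Unset Strict Implicit.

Local Open Scope ring_scope.
Local Open Scope complex_scope.

Section Commutant.
Variables (R : realType) (B : algType R[i]) (star : B -> B).
Hypothesis starK : involutive star.
Hypothesis starD : {morph star : x y / x + y}.
Hypothesis starZ : forall (c : R[i]) x, star (c *: x) = c^* *: star x.
Hypothesis starM : forall x y, star (x * y) = star y * star x.

Definition commutant (S : B -> Prop) (z : B) : Prop :=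
  forall t, S t -> z * t = t * z.

Lemma starB x y : star (x - y) = star x - star y.
Proof. by rewrite starD -scaleN1r starZ conjCN1 scaleN1r. Qed.

Lemma commutant_star (S : B -> Prop) :
  (forall x, S x -> S (star x)) -> forall z, commutant S z -> commutant S (star z).
Proof.
move=> S_star z cz t St.
by rewrite -[t]starK -starM -cz ?starM //; apply: S_star.
Qed.

Lemma star_subalgebra_commutant (S : B -> Prop) :
  (forall x, S x -> S (star x)) -> star_subalgebra star (commutant S).
Proof.
move=> S_star; split.
- by move=> t _; rewrite mul0r mulr0.
- by move=> x y cx cy t St; rewrite mulrDl mulrDr cx // cy.
- by move=> c x cx t St; rewrite -scalerAl -scalerAr cx.
- by move=> x y cx cy t St; rewrite -mulrA cy // mulrA cx // mulrA.
- exact: commutant_star.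
Qed.

Lemma sub_bicommutant (S : B -> Prop) x : S x -> commutant (commutant S) x.
Proof. by move=> Sx z cz; rewrite cz. Qed.

Lemma abelian_bicommutant (S : B -> Prop) :
  abelian_set S -> abelian_set (commutant (commutant S)).
Proof. by move=> abS y w cy cw; apply: cy => t St; apply: cw => t' St'; apply: abS. Qed.

Variable A : B -> Prop.
Hypothesis masaA : maximal_abelian_star_subalgebra star A.

(* The bicommutant of [A] and [h] is an abelian *-subalgebra containing [A]. *)
Lemma masa_selfadjoint h : star h = h -> commutant A h -> A h.
Proof.
move=> sa_h hA; have [[_ _ _ _ A_star] abA maxA] := masaA.
pose S t := A t \/ t = h.
have S_star : forall t, S t -> S (star t).
  by move=> t [At|->]; [left; apply: A_star | right].
have abS : abelian_set S.
  by move=> t t' [At|->] [At'|->] //; [apply: abA | rewrite hA | rewrite hA].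
apply: (maxA (commutant (commutant S))).
- by apply/star_subalgebra_commutant/commutant_star.
- exact: abelian_bicommutant.
- by move=> x Ax; apply: sub_bicommutant; left.
- by apply: sub_bicommutant; right.
Qed.

Lemma masa_commutant x : commutant A x -> A x.
Proof.
move=> xA; have [[_ AD AZ _ A_star] _ _] := masaA.
have [_ cD cZ _ c_star] := @star_subalgebra_commutant A A_star.
pose h := x + star x; pose k := 'i *: (x - star x).
have -> : x = 2^-1 *: (h + (- 'i) *: k).
  rewrite /h /k (@scalerA _ B) mulNr -expr2 sqrCi opprK scale1r addrACA subrr addr0.
  by rewrite -mulr2n -(@scaler_nat _ B) (@scalerA _ B) mulVf ?scale1r // pnatr_eq0.
have cB : forall y z, commutant A y -> commutant A z -> commutant A (y - z).
  by move=> y z cy cz; rewrite -scaleN1r; apply: cD => //; apply: cZ.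
apply/AZ/AD; last apply: AZ.
- apply: masa_selfadjoint; first by rewrite starD starK addrC.
  by apply: cD => //; apply: c_star.
- apply: masa_selfadjoint; last by apply/cZ/cB => //; apply: c_star.
  by rewrite starZ starB starK conjCi scaleNr -scalerN opprB.
Qed.

End Commutant.

(* [(id (x) e_ij) (psi_2 a)], as an element of [M_n (x) B]. *)
Definition psi2_slice {X : Type} {n : nat} (psi : X -> 'M[X]_n) (i j : 'I_n) (a : X)
  : 'M[X]_n := \matrix_(k, l) psi (psi a k l) i j.

Section SecondIterate.
Variables (B : pzRingType) (n : nat) (psi : B -> 'M[B]_n).
Hypothesis psiD : {morph psi : x y / x + y}.
Hypothesis psiM : {morph psi : x y / x * y >-> x *m y}.

Lemma psi_sum (I : Type) (r : seq I) (P : pred I) (F : I -> B) :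
  psi (\sum_(x <- r | P x) F x) = \sum_(x <- r | P x) psi (F x).
Proof.
have psi0 : psi 0 = 0 by apply: (addrI (psi 0)); rewrite -psiD !addr0.
exact: (big_morph psi psiD psi0).
Qed.

Lemma psi2M x y k l :
  psi (psi (x * y) k l) = \sum_r psi (psi x k r) *m psi (psi y r l).
Proof. by rewrite psiM mxE psi_sum; apply: eq_bigr => r _; rewrite psiM. Qed.

Lemma mul_mx_scalarE m p (M : 'M[B]_(m, p)) c i j : (M *m c%:M) i j = M i j * c.
Proof.
rewrite mxE (bigD1 j) //= mxE eqxx mulr1n big1 ?addr0 // => r /negbTE r_j.
by rewrite mxE r_j mulr0n mulr0.
Qed.

Section Slice.
Variables (a b b' : B) (i j : 'I_n).
Hypothesis sigma_b : forall k l, psi (psi b' k l) = (psi b k l)%:M.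

Lemma psi2_slice_mulr : psi2_slice psi i j (a * b') = psi2_slice psi i j a *m psi b.
Proof.
apply/matrixP => k l; rewrite !mxE psi2M summxE; apply: eq_bigr => r _.
by rewrite sigma_b mul_mx_scalarE mxE.
Qed.

Lemma psi2_slice_mull : psi2_slice psi i j (b' * a) = psi b *m psi2_slice psi i j a.
Proof.
apply/matrixP => k l; rewrite !mxE psi2M summxE; apply: eq_bigr => r _.
by rewrite sigma_b mul_scalar_mx !mxE.
Qed.

Lemma psi2_slice_commute :
  a * b' = b' * a -> psi2_slice psi i j a *m psi b = psi b *m psi2_slice psi i j a.
Proof. by move=> ab; rewrite -psi2_slice_mulr ab psi2_slice_mull. Qed.

End Slice.
End SecondIterate.

Section SecondIndex.
Variable n : nat.

Lemma ins_second_lift m (i : 'I_n) (k : 'I_m -> 'I_n) (q : 'I_m) :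
  ins_second i k (lift (inord 1) q) = k q.
Proof. by rewrite /ins_second liftK. Qed.

Lemma ins_second_inord1 m (i : 'I_n) (k : 'I_m -> 'I_n) : ins_second i k (inord 1) = i.
Proof. by rewrite /ins_second unlift_none. Qed.

Lemma minit_ins_second m (i : 'I_n) (k : 'I_m.+2 -> 'I_n) (p : 'I_m.+2) :
  minit (ins_second i k) p = ins_second i (minit k) p.
Proof.
rewrite /minit; case: (unliftP (inord 1) p) => [q ->|->].
- have -> : widen_ord (leqnSn _) (lift (inord 1) q)
            = lift (inord 1) (widen_ord (leqnSn _) q) :> 'I_m.+3.
    by apply: val_inj; rewrite /= !inordK.
  by rewrite !ins_second_lift.
- have -> : widen_ord (leqnSn _) (inord 1) = inord 1 :> 'I_m.+3.
    by apply: val_inj; rewrite /= !inordK.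
  by rewrite !ins_second_inord1.
Qed.

Lemma mlast_ins_second m (i : 'I_n) (k : 'I_m.+2 -> 'I_n) :
  mlast (ins_second i k) = mlast k.
Proof.
rewrite /mlast.
have -> : ord_max = lift (inord 1) ord_max :> 'I_m.+3 by apply: val_inj; rewrite /= inordK.
by rewrite ins_second_lift.
Qed.

Lemma psi_iterS (X : Type) (psi : X -> 'M[X]_n) m b (k l : 'I_m.+1 -> 'I_n) :
  psi_iter psi m.+1 b k l = psi (psi_iter psi m b (minit k) (minit l)) (mlast k) (mlast l).
Proof. by []. Qed.

Lemma eq_psi_iter (X : Type) (psi : X -> 'M[X]_n) m b (k k' l l' : 'I_m -> 'I_n) :
  k =1 k' -> l =1 l' -> psi_iter psi m b k l = psi_iter psi m b k' l'.
Proof.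
elim: m k k' l l' => [//|m IH] k k' l l' kk' ll' /=.
by rewrite /mlast kk' ll' (IH _ (minit k') _ (minit l')) // => p; rewrite /minit.
Qed.

(* Inserting the fixed indices [i], [j] in position 2 of [psi_{m+1} a] only
   affects the first two applications of [psi], which produce the slice [psi t]. *)
Lemma psi_iter_ins_second (X : Type) (psi : X -> 'M[X]_n) (i j : 'I_n) a t :
  psi t = psi2_slice psi i j a -> forall m, (0 < m)%N -> forall k l,
  psi_iter psi m.+1 a (ins_second i k) (ins_second j l) = psi_iter psi m t k l.
Proof.
move=> psi_t [//|m] _; elim: m => [|m IH] k l.
  rewrite /= /mlast /minit psi_t mxE.
  have -> : ord_max = inord 1 :> 'I_2 by apply: val_inj; rewrite /= inordK.
  have -> : widen_ord (leqnSn 1) ord_max = lift (inord 1) ord_max :> 'I_2.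
    by apply: val_inj; rewrite /= inordK.
  by rewrite !ins_second_inord1 !ins_second_lift.
rewrite psi_iterS [RHS]psi_iterS !mlast_ins_second -IH.
by congr (psi _ _ _); apply: eq_psi_iter => p; apply: minit_ins_second.
Qed.

Lemma psi_iter2_id_tens_f (X : nzRingType) (psi : X -> 'M[X]_n) b b' :
  (forall k l, psi_iter psi 2 b' k l = id_tens_f (psi_iter psi 1 b) k l) ->
  forall k l, psi (psi b' k l) = (psi b k l)%:M.
Proof.
move=> sigma_b k l; apply/matrixP => k1 l1; rewrite mxE.
have := sigma_b (fun p : 'I_2 => if val p == 0%N then k else k1)
                (fun p : 'I_2 => if val p == 0%N then l else l1).
by rewrite /id_tens_f /= => ->; case: eqP.
Qed.

End SecondIndex.

Theorem proposition3p7 (R : realType) (B : algType R[i]) (star : B -> B) (nrm : B -> R)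
  (n : nat) (psi : B -> 'M[B]_n) (A : B -> Prop) (phi : B -> R[i]) :
  is_unital_Cstar_algebra star nrm ->
  star_iso star psi ->
  psi 1 = 1%:M ->
  maximal_abelian_star_subalgebra star A ->
  unital_hom_on A phi ->
  positive_contraction star nrm phi ->
  (* sigma_2(A) \subset A, with sigma_2 = psi_2^{-1} o (id (x) f) o psi_1 *)
  (forall a, A a -> exists a', A a' /\
     forall k l, psi_iter psi 2 a' k l = id_tens_f (psi_iter psi 1 a) k l) ->
  forall m : nat, (1 <= m)%N -> forall i j : 'I_n,
  forall a, A a -> exists a', A a' /\
     forall k l, slice_second i j (phi_iter psi phi m.+1 a) k l = phi_iter psi phi m a' k l.
Proof.
move=> [[starK [starD [starZ starM]]] _ _ _ _] [psi_lin psiM _ [g psiK gK]] _ masaA _ _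
  sigma2A m m_gt0 i j a Aa.
have psiD : {morph psi : x y / x + y}.
  by move=> x y; apply/matrixP => k l; rewrite mxE -[psi x k l](@scale1r _ B) -psi_lin scale1r.
pose t := g (psi2_slice psi i j a).
have psi_t : psi t = psi2_slice psi i j a by apply: gK.
exists t; split; last first.
  by move=> k l; rewrite /slice_second /phi_iter (psi_iter_ins_second psi_t).
apply: (masa_commutant starK starD starZ starM masaA) => b Ab.
have [b' [Ab' /psi_iter2_id_tens_f sigma_b]] := sigma2A b Ab.
apply: (can_inj psiK); rewrite !psiM psi_t.
apply: (psi2_slice_commute psiD psiM _ _ sigma_b).
by have [_ abA _] := masaA; apply: abA.
Qed.
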